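(* In the complex single-interference setting of the context, assume additionally $\tau\in(0,\pi/2)$, $c_1\neq0$, and $\delta_1:=\sigma_n^2\tan\tau-|c_1|\cos\tau\cos(\phi_c+\phi_z)\neq0$. Then $\mathrm{MSE}_{\rm RZF}=\mathrm{MSE}_{\rm MMSE\text{-}DR}$ if and only if $\cos(\phi_c+\phi_z)=-1$.
   Context: Complex single-interference model: $y(k)=s_0(k)h_0+s_1(k)h_1+n(k)\in\mathbb{C}^N$ ($N\ge2$), with $\|h_0\|=\|h_1\|=1$, $h_0^{\sf H}h_1=\sin\tau\,e^{i\phi_z}$, $\tau\in[0,\pi/2)$, $\phi_z\in[0,2\pi)$; zero-mean jointly weakly stationary complex signals $s_0,s_1$ with $\sigma_j^2:=E|s_j(k)|^2>0$, $c_1:=E[s_0^*(k)s_1(k)]=|c_1|e^{i\phi_c}$, $\phi_c\in[0,2\pi)$; noise $n(k)\sim\mathcal{CN}(0,\sigma_n^2I)$, $\sigma_n^2>0$, uncorrelated with the signals. $R:=E[y(k)y(k)^{\sf H}]$. The MSE of $w$ is $J_{\rm MSE}(w):=E|w^{\sf H}y(k)-s_0(k)|^2$. RZF beamformer $w_{\rm RZF}(\lambda):=R_\lambda^{-1}h_0/(h_0^{\sf H}R_\lambda^{-1}h_0)$ with $R_\lambda:=R+\lambda h_1h_1^{\sf H}$, $\lambda\ge0$, and $\mathrm{MSE}_{\rm RZF}:=\inf_{\lambda\ge0}J_{\rm MSE}(w_{\rm RZF}(\lambda))$. MMSE-DR beamformer $w_{\rm MMSE\text{-}DR}:=\widetilde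 R^{-1}h_0/(h_0^{\sf H}\widetilde R^{-1}h_0)$ with $\widetilde R:=\sigma_n^2I+\sigma_1^2h_1h_1^{\sf H}$, and $\mathrm{MSE}_{\rm MMSE\text{-}DR}:=J_{\rm MSE}(w_{\rm MMSE\text{-}DR})$. *)

From HB Require Import structures.
From mathcomp Require Import all_boot all_order all_algebra.
From mathcomp Require Import all_classical all_reals.
From mathcomp Require Import trigo.
From mathcomp Require Import complex.
Set Implicit Arguments. Unset Strict Implicit. Unset Printing Implicit Defensive.
Import Order.TTheory GRing.Theory Num.Theory.
Local Open Scope ring_scope.
Local Open Scope classical_set_scope.

Section Model.
Variable R : realType.
Local Notation C := (R[i]).

Definition expi (t : R) : C := Complex (cos t) (sin t).
Definition rc (x : R) : C := Complex x 0.
Definition adjv (N : nat) (v : 'cV[C]_N) : 'rV[C]_N := (map_mx (@conjc R) v)^T.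
Definition dotH (N : nat) (u v : 'cV[C]_N) : C := (adjv u *m v) 0 0.

Variables (N : nat) (h0 h1 : 'cV[C]_N) (s0 s1 sn : R) (c1 : C).
(* s0 = sigma_0^2, s1 = sigma_1^2, sn = sigma_n^2, c1 = E[s0^* s1] *)

(* R = E[y y^H] for y = s0 h0 + s1 h1 + n *)
Definition covR : 'M[C]_N :=
  rc s0 *: (h0 *m adjv h0) + rc s1 *: (h1 *m adjv h1)
  + conjc c1 *: (h0 *m adjv h1) + c1 *: (h1 *m adjv h0) + rc sn *: 1%:M.

(* p = E[y s0^*] *)
Definition crossp : 'cV[C]_N := rc s0 *: h0 + c1 *: h1.

(* J_MSE(w) = E|w^H y - s0|^2 = w^H R w - w^H p - p^H w + sigma_0^2 *)
Definition J_MSE (w : 'cV[C]_N) : R :=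
  complex.Re (dotH w (covR *m w) - dotH w crossp - dotH crossp w) + s0.

Definition Rlam (lam : R) : 'M[C]_N := covR + rc lam *: (h1 *m adjv h1).

Definition w_RZF (lam : R) : 'cV[C]_N :=
  (dotH h0 (invmx (Rlam lam) *m h0))^-1 *: (invmx (Rlam lam) *m h0).

Definition MSE_RZF : R :=
  inf [set x | exists2 lam : R, 0 <= lam & x = J_MSE (w_RZF lam)].

Definition Rtilde : 'M[C]_N := rc sn *: 1%:M + rc s1 *: (h1 *m adjv h1).

Definition w_MMSE_DR : 'cV[C]_N :=
  (dotH h0 (invmx Rtilde *m h0))^-1 *: (invmx Rtilde *m h0).

Definition MSE_MMSE_DR : R := J_MSE w_MMSE_DR.

End Model.

From HB Require Import structures.
From mathcomp Require Import all_boot all_order all_algebra.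
From mathcomp Require Import all_classical all_reals.
From mathcomp Require Import trigo.
From mathcomp Require Import complex.
From mathcomp Require Import ring lra.
Set Implicit Arguments.
Unset Strict Implicit.
Unset Printing Implicit Defensive.
Import Order.TTheory GRing.Theory Num.Theory.
Local Open Scope ring_scope.

(* For a distortionless beamformer (h0^H w = 1) the terms of the MSE involving c1
   cancel and J(w) = w^H Rtilde w.  The MMSE-DR beamformer w_DR minimises this
   quadratic form on the hyperplane h0^H w = 1, so
     J(w) = J(w_DR) + (w - w_DR)^H Rtilde (w - w_DR) >= J(w_DR) + s1 |h1^H (w - w_DR)|^2,
   with equality as soon as Rtilde w is also proportional to h0.  Solving R_lam w ~ h0
   for h1^H w_RZF(lam) gives, with c = cos^2 tau and E = sn + s1 c,
     |h1^H (w_RZF(lam) - w_DR)| = c |E c1 + lam sn rho^*| / ((E + lam c) E),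
   and |E c1 + lam sn rho^*|^2 = (E|c1|)^2 + (lam sn sin tau)^2
   + 2 E |c1| lam sn sin tau cos(phic + phiz).  Unless cos(phic + phiz) = -1 this
   dominates a fixed multiple of (E + lam c)^2, which keeps the RZF MSE uniformly
   above J(w_DR); when cos(phic + phiz) = -1 it vanishes at lam = E|c1|/(sn sin tau),
   and there R_lam w_RZF(lam) - Rtilde w_RZF(lam) ~ h0, so w_RZF(lam) attains J(w_DR). *)

Section ComplexFacts.
Variable R : realType.
Implicit Types (a u v : R) (x y z : R[i]).

Definition sqnorm z : R := complex.Re z ^+ 2 + complex.Im z ^+ 2.

Lemma rcE a : rc a = (a%:C)%C. Proof. by []. Qed.

Lemma rcD a u : rc (a + u) = rc a + rc u. Proof. by rewrite !rcE rmorphD. Qed.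

Lemma rcN a : rc (- a) = - rc a. Proof. by rewrite !rcE rmorphN. Qed.

Lemma rc0 : rc 0 = 0 :> R[i]. Proof. by []. Qed.

Lemma rc_eq0 a : (rc a == 0) = (a == 0).
Proof. by rewrite eq_complex /= eqxx andbT. Qed.

Lemma rc1 : rc 1 = 1 :> R[i]. Proof. by []. Qed.

Lemma rcM a u : rc (a * u) = rc a * rc u. Proof. by rewrite !rcE rmorphM. Qed.

Lemma conjc_rc a : conjc (rc a) = rc a. Proof. exact: conjc_real. Qed.

Lemma conjcD x y : conjc (x + y) = conjc x + conjc y. Proof. exact: rmorphD. Qed.

Lemma conjcM x y : conjc (x * y) = conjc x * conjc y. Proof. exact: rmorphM. Qed.

Lemma Re_rcM a z : complex.Re (rc a * z) = a * complex.Re z.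
Proof. by case: z => x y /=; rewrite mul0r subr0. Qed.

Lemma sqnorm_ge0 z : 0 <= sqnorm z.
Proof. by rewrite addr_ge0 ?sqr_ge0. Qed.

Lemma sqnorm_eq0 z : sqnorm z = 0 -> z = 0.
Proof.
case: z => a b; rewrite /sqnorm /= => /eqP.
rewrite paddr_eq0 ?sqr_ge0 // !sqrf_eq0 => /andP[/eqP-> /eqP->] //.
Qed.

Lemma mulJc z : conjc z * z = rc (sqnorm z).
Proof. by case: z => a b; rewrite /sqnorm /rc /=; congr Complex; ring. Qed.

Lemma sqnormM x y : sqnorm (x * y) = sqnorm x * sqnorm y.
Proof. by case: x => a b; case: y => c d; rewrite /sqnorm /=; ring. Qed.

Lemma sqnormN z : sqnorm (- z) = sqnorm z.
Proof. by rewrite /sqnorm !raddfN !sqrrN. Qed.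

Lemma sqnorm_rc a : sqnorm (rc a) = a ^+ 2.
Proof. by rewrite /sqnorm /= expr0n addr0. Qed.

Lemma conjc_expi (t : R) : conjc (expi t) = expi (- t).
Proof. by rewrite /expi /= cosN sinN. Qed.

Lemma sqnorm_expi (t : R) : sqnorm (expi t) = 1.
Proof. exact: cos2Dsin2. Qed.

Lemma sqnorm_polarD u v (al be : R) :
  sqnorm (rc u * expi al + rc v * expi be) = u ^+ 2 + v ^+ 2 + 2 * u * v * cos (al - be).
Proof.
rewrite /sqnorm /rc /expi /= cosB.
have := cos2Dsin2 al; have := cos2Dsin2 be; nra.
Qed.

(* A 2x2 Hermitian form [[s0, c], [c^*, s1]] with s0 > 0 and |c|^2 <= s0 s1 is
   nonnegative: s0 times it is |s0 p + c^* q|^2 + (s0 s1 - |c|^2) |q|^2. *)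
Lemma hermitian2_ge0 (s0 s1 : R) c p q : 0 < s0 -> sqnorm c <= s0 * s1 ->
  0 <= s0 * sqnorm p + s1 * sqnorm q + 2 * complex.Re (c * p * conjc q).
Proof.
move=> s0_gt0 cs; rewrite -(pmulr_rge0 _ s0_gt0).
have -> : s0 * (s0 * sqnorm p + s1 * sqnorm q + 2 * complex.Re (c * p * conjc q))
    = sqnorm (rc s0 * p + conjc c * q) + (s0 * s1 - sqnorm c) * sqnorm q.
  by clear cs; case: c => a b; case: p => x y; case: q => u v; rewrite /sqnorm /=; ring.
by rewrite addr_ge0 ?sqnorm_ge0 // mulr_ge0 ?sqnorm_ge0 ?subr_ge0.
Qed.

End ComplexFacts.

Section RealFacts.
Variable R : realFieldType.
Implicit Types (a b p q u v psi : R).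

Lemma ler_sqrD_cos u v psi : 0 <= u * v -> -1 <= psi <= 1 ->
  (1 + psi) / 2 * (u ^+ 2 + v ^+ 2) <= u ^+ 2 + v ^+ 2 + 2 * u * v * psi.
Proof.
move=> uv_ge0 /andP[psi_geN1 psi_le1].
have psiD_ge0 : 0 <= 1 + psi by lra.
have psiB_ge0 : 0 <= 1 - psi by lra.
by have := mulr_ge0 psiB_ge0 (sqr_ge0 (u - v)); have := mulr_ge0 psiD_ge0 uv_ge0; lra.
Qed.

Lemma ler_weighted_sqrD a b p q : 0 < a -> 0 < b ->
  a * b / (a + b) * (p + q) ^+ 2 <= a * p ^+ 2 + b * q ^+ 2.
Proof.
move=> a_gt0 b_gt0; rewrite mulrAC ler_pdivrMr ?addr_gt0 //.
have := sqr_ge0 (a * p - b * q); lra.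
Qed.

End RealFacts.

Section HermitianProduct.
Variables (R : realType) (N : nat).
Implicit Types (u v w : 'cV[R[i]]_N) (k : R[i]).

Lemma dotH_sum u v : dotH u v = \sum_i conjc (u i 0) * v i 0.
Proof. by rewrite /dotH !mxE; apply: eq_bigr => i _; rewrite !mxE. Qed.

Lemma dotHDr u v w : dotH u (v + w) = dotH u v + dotH u w.
Proof. by rewrite !dotH_sum -big_split; apply: eq_bigr => i _; rewrite !mxE mulrDr. Qed.

Lemma dotHDl u v w : dotH (u + v) w = dotH u w + dotH v w.
Proof. by rewrite !dotH_sum -big_split; apply: eq_bigr => i _; rewrite !mxE rmorphD mulrDl. Qed.

Lemma dotHZr u v k : dotH u (k *: v) = k * dotH u v.
Proof. by rewrite !dotH_sum mulr_sumr; apply: eq_bigr => i _; rewrite !mxE mulrCA. Qed.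

Lemma dotHZl u v k : dotH (k *: u) v = conjc k * dotH u v.
Proof. by rewrite !dotH_sum mulr_sumr; apply: eq_bigr => i _; rewrite !mxE rmorphM mulrA. Qed.

Lemma dotHC u v : dotH u v = conjc (dotH v u).
Proof. by rewrite !dotH_sum rmorph_sum; apply: eq_bigr => i _; rewrite rmorphM /= conjcK mulrC. Qed.

Lemma dotHBl u v w : dotH (u - v) w = dotH u w - dotH v w.
Proof. by rewrite dotHDl -scaleN1r dotHZl rmorphN1 mulN1r. Qed.

Lemma dotHBr u v w : dotH u (v - w) = dotH u v - dotH u w.
Proof. by rewrite dotHDr -scaleN1r dotHZr mulN1r. Qed.

Lemma dotH0r u : dotH u 0 = 0.
Proof. by rewrite /dotH mulmx0 mxE. Qed.

Lemma mulmx_outer u v w : (u *m adjv v) *m w = dotH v w *: u.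
Proof. by apply/matrixP => i j; rewrite -mulmxA !mxE big_ord1 (ord1 j) mulrC. Qed.

Lemma Re_dotHH u : complex.Re (dotH u u) = \sum_i sqnorm (u i 0).
Proof. by rewrite dotH_sum raddf_sum; apply: eq_bigr => i _; rewrite mulJc. Qed.

Lemma Re_dotHH_ge0 u : 0 <= complex.Re (dotH u u).
Proof. by rewrite Re_dotHH sumr_ge0 // => i _; exact: sqnorm_ge0. Qed.

Lemma Re_dotHH_gt0 u : u != 0 -> 0 < complex.Re (dotH u u).
Proof.
move=> u_neq0; rewrite lt_neqAle Re_dotHH_ge0 andbT Re_dotHH.
apply: contraNneq u_neq0 => /esym/eqP; rewrite psumr_eq0 => [/allP u0|i _]; last exact: sqnorm_ge0.
apply/eqP/matrixP => i j; rewrite (ord1 j) mxE.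
by apply: sqnorm_eq0; apply/eqP/u0; rewrite mem_index_enum.
Qed.

End HermitianProduct.

Section Mvdr.
Variables (R : realType) (N : nat) (M : 'M[R[i]]_N) (h : 'cV[R[i]]_N).

Definition mvdr : 'cV[R[i]]_N := (dotH h (invmx M *m h))^-1 *: (invmx M *m h).

Hypothesis M_herm : forall x y, dotH (M *m x) y = dotH x (M *m y).
Hypothesis M_posdef : forall x, x != 0 -> 0 < complex.Re (dotH x (M *m x)).
Hypothesis h_neq0 : h != 0.

Lemma posdef_unitmx : M \in unitmx.
Proof.
rewrite unitmxE unitfE -det_tr; apply/negP => /det0P[v v_neq0 vM0].
have vT_neq0 : v^T != 0 by rewrite -trmx0 (inj_eq (@trmx_inj _ _ _)).
have Mv0 : M *m v^T = 0 by rewrite -[M]trmxK -trmx_mul vM0 trmx0.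
by move/M_posdef: vT_neq0; rewrite Mv0 dotH0r ltxx.
Qed.

Lemma mvdrP : dotH h mvdr = 1 /\ exists b, M *m mvdr = b *: h.
Proof.
set u := invmx M *m h.
have Mu : M *m u = h by rewrite mulmxA mulmxV ?posdef_unitmx ?mul1mx.
have u_neq0 : u != 0 by apply: contraNneq h_neq0 => u0; rewrite -Mu u0 mulmx0.
have d_neq0 : dotH h u != 0.
  by apply: contraTneq (M_posdef u_neq0) => d0; rewrite -M_herm Mu d0 ltxx.
split; first by rewrite dotHZr mulVf.
by exists (dotH h u)^-1; rewrite -scalemxAr Mu.
Qed.

End Mvdr.

Lemma eq_of_subr_eq (V : zmodType) (a b c d : V) : a = b -> c - d = a - b -> c = d.
Proof. by move=> ->; rewrite subrr => /subr0_eq. Qed.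

Section RegularizedCovariance.
Variables (R : realType) (N : nat) (h0 h1 : 'cV[R[i]]_N) (s0 s1 sn : R) (c1 : R[i]).
Local Notation Rl := (Rlam h0 h1 s0 s1 sn c1).
Local Notation rho := (dotH h0 h1).
Implicit Types (x y w : 'cV[R[i]]_N) (lam : R).

Lemma covR_Rlam0 : covR h0 h1 s0 s1 sn c1 = Rl 0.
Proof. by rewrite /Rlam rcE raddf0 scale0r addr0. Qed.

Lemma Rlam_mul lam x : Rl lam *m x =
  (rc s0 * dotH h0 x + conjc c1 * dotH h1 x) *: h0
  + (rc (s1 + lam) * dotH h1 x + c1 * dotH h0 x) *: h1 + rc sn *: x.
Proof.
rewrite /Rlam /covR !mulmxDl -!scalemxAl !mulmx_outer mul1mx rcD.
by apply/matrixP => i j; rewrite !mxE; ring.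
Qed.

Lemma Rlam_herm lam x y : dotH (Rl lam *m x) y = dotH x (Rl lam *m y).
Proof.
rewrite !Rlam_mul !dotHDl !dotHDr !dotHZl !dotHZr (dotHC x h0) (dotHC x h1).
by rewrite !conjcD !conjcM !conjcK !conjc_rc; ring.
Qed.

Lemma Re_dotH_Rlam lam x : complex.Re (dotH x (Rl lam *m x)) =
  s0 * sqnorm (dotH h0 x) + s1 * sqnorm (dotH h1 x)
  + 2 * complex.Re (c1 * dotH h0 x * conjc (dotH h1 x))
  + lam * sqnorm (dotH h1 x) + sn * complex.Re (dotH x x).
Proof.
rewrite Rlam_mul !dotHDr !dotHZr (dotHC x h0) (dotHC x h1) !raddfD /= Re_rcM.
move: (dotH h0 x) (dotH h1 x) => p q.
by case: p q c1 => [a b] [c d] [e f]; rewrite /sqnorm /=; ring.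
Qed.

Lemma Rlam_posdef lam : 0 < s0 -> 0 < sn -> sqnorm c1 <= s0 * s1 -> 0 <= lam ->
  forall x, x != 0 -> 0 < complex.Re (dotH x (Rl lam *m x)).
Proof.
move=> s0_gt0 sn_gt0 c1_le lam_ge0 x x_neq0; rewrite Re_dotH_Rlam.
have := hermitian2_ge0 (dotH h0 x) (dotH h1 x) s0_gt0 c1_le.
have := mulr_ge0 lam_ge0 (sqnorm_ge0 (dotH h1 x)).
have := mulr_gt0 sn_gt0 (Re_dotHH_gt0 x_neq0).
lra.
Qed.

Hypotheses (h00 : dotH h0 h0 = 1) (h11 : dotH h1 h1 = 1).

Lemma Rlam_beam_coupling lam w b : dotH h0 w = 1 -> Rl lam *m w = b *: h0 ->
  (rc sn + rc (s1 + lam) * rc (1 - sqnorm rho)) * dotH h1 w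
  = rc sn * conjc rho - rc (1 - sqnorm rho) * c1.
Proof.
move=> w_dl Rw.
have e0 := congr1 (dotH h0) Rw; have e1 := congr1 (dotH h1) Rw.
rewrite Rlam_mul !dotHDr !dotHZr h00 w_dl (dotHC h1 h0) h11 !mulr1 in e0 e1.
rewrite -e0 in e1; apply: (eq_of_subr_eq e1).
by rewrite [rc (1 - _)]rcD rcN rc1 -mulJc rcD; ring.
Qed.

End RegularizedCovariance.

Section InterferencePlusNoise.
Variables (R : realType) (N : nat) (h1 : 'cV[R[i]]_N) (s1 sn : R).
Local Notation Rt := (Rtilde h1 s1 sn).
Implicit Types (x v h : 'cV[R[i]]_N).

Lemma Rtilde_Rlam h : Rt = Rlam h h1 0 s1 sn 0 0.
Proof. by rewrite /Rtilde /Rlam /covR rc0 conjc0 !scale0r !add0r !addr0 addrC. Qed.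

Lemma Rtilde_herm x v : dotH (Rt *m x) v = dotH x (Rt *m v).
Proof. by rewrite (Rtilde_Rlam 0) Rlam_herm. Qed.

Lemma Re_dotH_Rtilde x :
  complex.Re (dotH x (Rt *m x)) = s1 * sqnorm (dotH h1 x) + sn * complex.Re (dotH x x).
Proof. by rewrite (Rtilde_Rlam 0) Re_dotH_Rlam !mul0r raddf0 mulr0 add0r !addr0. Qed.

Lemma Rtilde_posdef : 0 <= s1 -> 0 < sn -> forall x, x != 0 -> 0 < complex.Re (dotH x (Rt *m x)).
Proof.
move=> s1_ge0 sn_gt0 x x_neq0; rewrite Re_dotH_Rtilde.
by rewrite ltr_wpDl ?mulr_ge0 ?sqnorm_ge0 // mulr_gt0 // Re_dotHH_gt0.
Qed.

End InterferencePlusNoise.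

Section DistortionlessMSE.
Variables (R : realType) (N : nat) (h0 h1 : 'cV[R[i]]_N) (s0 s1 sn : R) (c1 : R[i]).
Local Notation J := (J_MSE h0 h1 s0 s1 sn c1).
Local Notation Rt := (Rtilde h1 s1 sn).
Local Notation Rl := (Rlam h0 h1 s0 s1 sn c1).
Implicit Types (w v x : 'cV[R[i]]_N).

Lemma Rlam_mul_Rtilde lam x : Rl lam *m x = Rt *m x
  + (rc s0 * dotH h0 x + conjc c1 * dotH h1 x) *: h0 + (c1 * dotH h0 x + rc lam * dotH h1 x) *: h1.
Proof.
rewrite (Rtilde_Rlam h1 s1 sn h0) !Rlam_mul rc0 conjc0 !rcD rc0.
by apply/matrixP => i j; rewrite !mxE; ring.
Qed.

Lemma J_MSE_distortionless w : dotH h0 w = 1 -> J w = complex.Re (dotH w (Rt *m w)).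
Proof.
move=> w_dl; rewrite /J_MSE covR_Rlam0 Rlam_mul_Rtilde /crossp rc0.
rewrite !dotHDr !dotHDl !dotHZr !dotHZl (dotHC w h0) (dotHC w h1) w_dl conjc1 conjc_rc.
by rewrite -[X in _ + X = _]/(complex.Re (rc s0)) -raddfD; congr complex.Re; ring.
Qed.

Section Gap.
Variables (w v : 'cV[R[i]]_N) (b : R[i]).
Hypotheses (w_dl : dotH h0 w = 1) (v_dl : dotH h0 v = 1) (Rv : Rt *m v = b *: h0).

Lemma dotH_sub_h0 : dotH (w - v) h0 = 0.
Proof. by rewrite dotHBl (dotHC w h0) (dotHC v h0) w_dl v_dl subrr. Qed.

Lemma J_MSE_gap : J w = J v + complex.Re (dotH (w - v) (Rt *m (w - v))).
Proof.
rewrite !J_MSE_distortionless // -raddfD; congr complex.Re.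
have cross1 : dotH (w - v) (Rt *m v) = 0 by rewrite Rv dotHZr dotH_sub_h0 mulr0.
have cross2 : dotH v (Rt *m (w - v)) = 0.
  by rewrite -Rtilde_herm Rv dotHZl dotHC dotH_sub_h0 conjc0 mulr0.
rewrite -[in LHS](subrK v w); move: (w - v) cross1 cross2 => x cross1 cross2.
by rewrite mulmxDr !dotHDl !dotHDr cross1 cross2; ring.
Qed.

Lemma J_MSE_ge_gap : 0 <= sn -> J v + s1 * sqnorm (dotH h1 w - dotH h1 v) <= J w.
Proof.
move=> sn_ge0; rewrite J_MSE_gap lerD2l Re_dotH_Rtilde dotHBr lerDl.
by rewrite mulr_ge0 ?Re_dotHH_ge0.
Qed.

Lemma J_MSE_eq_of_beam b' : Rt *m w = b' *: h0 -> J w = J v.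
Proof.
move=> Rw; rewrite J_MSE_gap mulmxBr Rw Rv -scalerBl dotHZr dotH_sub_h0 mulr0.
by rewrite raddf0 addr0.
Qed.

End Gap.

End DistortionlessMSE.

Section RZFversusDR.
Variables (R : realType) (N : nat) (h0 h1 : 'cV[R[i]]_N) (s0 s1 sn : R) (c1 : R[i]).
Hypotheses (h00 : dotH h0 h0 = 1) (h11 : dotH h1 h1 = 1).
Hypotheses (s0_gt0 : 0 < s0) (s1_gt0 : 0 < s1) (sn_gt0 : 0 < sn).
Hypothesis c1_le : sqnorm c1 <= s0 * s1.
Local Notation rho := (dotH h0 h1).
Hypothesis rho_lt1 : sqnorm rho < 1.

Local Notation J := (J_MSE h0 h1 s0 s1 sn c1).
Local Notation wR := (w_RZF h0 h1 s0 s1 sn c1).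
Local Notation wD := (w_MMSE_DR h0 h1 s1 sn).
Local Notation c2 := (1 - sqnorm rho).
Local Notation E := (sn + s1 * c2).
Local Notation Z lam := (rc E * c1 + rc (lam * sn) * conjc rho).

Lemma c2_gt0 : 0 < c2. Proof. by rewrite subr_gt0. Qed.

Lemma E_gt0 : 0 < E. Proof. exact: addr_gt0 sn_gt0 (mulr_gt0 s1_gt0 c2_gt0). Qed.

Lemma Elam_gt0 lam : 0 <= lam -> 0 < E + lam * c2.
Proof. by move=> lam_ge0; have := E_gt0; have := mulr_ge0 lam_ge0 (ltW c2_gt0); lra. Qed.

Lemma h0_neq0 : h0 != 0.
Proof. by apply: contra_eq_neq h00 => ->; rewrite dotH0r eq_sym oner_neq0. Qed.

Lemma RZF_spec lam : 0 <= lam ->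
  dotH h0 (wR lam) = 1 /\ exists b, Rlam h0 h1 s0 s1 sn c1 lam *m wR lam = b *: h0.
Proof.
move=> lam_ge0; apply: mvdrP; first exact: Rlam_herm.
- exact: Rlam_posdef.
- exact: h0_neq0.
Qed.

Lemma DR_spec : dotH h0 wD = 1 /\ exists b, Rtilde h1 s1 sn *m wD = b *: h0.
Proof.
apply: mvdrP; first exact: Rtilde_herm.
- exact: Rtilde_posdef (ltW s1_gt0) sn_gt0.
- exact: h0_neq0.
Qed.

Lemma DR_coupling : rc E * dotH h1 wD = rc sn * conjc rho.
Proof.
have [wD_dl [b RwD]] := DR_spec; rewrite (Rtilde_Rlam h1 s1 sn h0) in RwD.
by have := Rlam_beam_coupling h00 h11 wD_dl RwD; rewrite addr0 mulr0 subr0 -rcM -rcD.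
Qed.

Lemma RZF_coupling lam : 0 <= lam ->
  rc (E + lam * c2) * dotH h1 (wR lam) = rc sn * conjc rho - rc c2 * c1.
Proof.
move=> lam_ge0; have [wR_dl [b RwR]] := RZF_spec lam_ge0.
by have := Rlam_beam_coupling h00 h11 wR_dl RwR; rewrite -rcM -rcD mulrDl addrA.
Qed.

Lemma RZF_sub_DR lam : 0 <= lam ->
  rc ((E + lam * c2) * E) * (dotH h1 (wR lam) - dotH h1 wD) = - (rc c2 * Z lam).
Proof.
move=> lam_ge0.
have elim_coupling (p e a a0 x y : R[i]) :
    p * a = x -> e * a0 = y -> p * e * (a - a0) = e * x - p * y.
  by move=> <- <-; ring.
rewrite rcM (elim_coupling _ _ _ _ _ _ (RZF_coupling lam_ge0) DR_coupling).
by rewrite [rc (E + _)]rcD [rc (lam * c2)]rcM [rc (lam * sn)]rcM; ring.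
Qed.

Lemma sqnorm_RZF_sub_DR lam : 0 <= lam ->
  sqnorm (dotH h1 (wR lam) - dotH h1 wD) = c2 ^+ 2 * sqnorm (Z lam) / ((E + lam * c2) * E) ^+ 2.
Proof.
move=> lam_ge0; have := congr1 (@sqnorm R) (RZF_sub_DR lam_ge0).
rewrite sqnormN !sqnormM !sqnorm_rc => <-.
by rewrite mulrAC divff ?mul1r // sqrf_eq0 mulf_neq0 // gt_eqF ?E_gt0 ?Elam_gt0.
Qed.

Lemma J_RZF_ge_DR lam : 0 <= lam ->
  J wD + s1 * (c2 ^+ 2 * sqnorm (Z lam) / ((E + lam * c2) * E) ^+ 2) <= J (wR lam).
Proof.
move=> lam_ge0; have [wR_dl _] := RZF_spec lam_ge0; have [wD_dl [b RwD]] := DR_spec.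
rewrite -sqnorm_RZF_sub_DR //; exact: (J_MSE_ge_gap s0 c1 wR_dl wD_dl RwD (ltW sn_gt0)).
Qed.

(* When [Z lam = 0] the cross-interference term [c1 + lam h1^H w] of [R_lam w]
   vanishes, so [w_RZF lam] is also an MVDR beamformer for [Rtilde]. *)
Lemma J_RZF_eq_DR lam : 0 <= lam -> Z lam = 0 -> J (wR lam) = J wD.
Proof.
move=> lam_ge0 Z0; have [wR_dl [b RwR]] := RZF_spec lam_ge0; have [wD_dl [b0 RwD]] := DR_spec.
have balanced : c1 + rc lam * dotH h1 (wR lam) = 0.
  apply: (mulfI (_ : rc (E + lam * c2) != 0)); first by rewrite rc_eq0 gt_eqF ?Elam_gt0.
  rewrite mulr0 -Z0 mulrDr mulrCA RZF_coupling // [rc (E + _)]rcD !rcM.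
  by ring.
have RtwR : Rtilde h1 s1 sn *m wR lam = (b - (rc s0 + conjc c1 * dotH h1 (wR lam))) *: h0.
  by rewrite scalerBl -RwR Rlam_mul_Rtilde wR_dl !mulr1 balanced scale0r addr0 addrK.
exact: (J_MSE_eq_of_beam s0 c1 wR_dl wD_dl RwD RtwR).
Qed.

Lemma J_DR_le_RZF lam : 0 <= lam -> J wD <= J (wR lam).
Proof.
move=> lam_ge0; have [wR_dl _] := RZF_spec lam_ge0; have [wD_dl [b RwD]] := DR_spec.
apply: le_trans (J_MSE_ge_gap s0 c1 wR_dl wD_dl RwD (ltW sn_gt0)).
by rewrite lerDl mulr_ge0 ?sqnorm_ge0 ?ltW.
Qed.

Lemma MSE_RZF_ge (K : R) : (forall lam, 0 <= lam -> J wD + K <= J (wR lam)) ->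
  J wD + K <= MSE_RZF h0 h1 s0 s1 sn c1.
Proof.
move=> gapK; apply: lb_le_inf; first by exists (J (wR 0)), 0.
by move=> _ [lam lam_ge0 ->]; exact: gapK.
Qed.

Lemma MSE_RZF_le lam : 0 <= lam -> MSE_RZF h0 h1 s0 s1 sn c1 <= J (wR lam).
Proof.
move=> lam_ge0; apply: ge_inf; last by exists lam.
by exists (J wD) => _ [l l_ge0 ->]; exact: J_DR_le_RZF.
Qed.

End RZFversusDR.

Section PolarParameters.
Variables (R : realType) (N : nat) (h0 h1 : 'cV[R[i]]_N) (s0 s1 sn : R) (c1 : R[i]).
Variables (tau phiz phic k : R).
Hypotheses (h00 : dotH h0 h0 = 1) (h11 : dotH h1 h1 = 1).
Hypotheses (s0_gt0 : 0 < s0) (s1_gt0 : 0 < s1) (sn_gt0 : 0 < sn).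
Hypothesis c1_le : sqnorm c1 <= s0 * s1.
Hypotheses (rhoE : dotH h0 h1 = rc (sin tau) * expi phiz) (c1E : c1 = rc k * expi phic).
Hypotheses (sin_gt0 : 0 < sin tau) (cos_gt0 : 0 < cos tau) (k_gt0 : 0 < k).

Local Notation rho := (dotH h0 h1).
Local Notation J := (J_MSE h0 h1 s0 s1 sn c1).
Local Notation wR := (w_RZF h0 h1 s0 s1 sn c1).
Local Notation wD := (w_MMSE_DR h0 h1 s1 sn).
Local Notation c2 := (cos tau ^+ 2).
Local Notation E := (sn + s1 * c2).
Local Notation A := (sn * sin tau).
Local Notation psi := (cos (phic + phiz)).
Local Notation m := (k ^+ 2 * (A / c2) ^+ 2 / (k ^+ 2 + (A / c2) ^+ 2)).
Local Notation Z lam := (rc E * c1 + rc (lam * sn) * conjc rho).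

Lemma one_sub_sqnorm_rho : 1 - sqnorm rho = c2.
Proof. by rewrite rhoE sqnormM sqnorm_rc sqnorm_expi mulr1 cos2sin2. Qed.

Lemma sqnorm_rho_lt1 : sqnorm rho < 1.
Proof. by rewrite -subr_gt0 one_sub_sqnorm_rho exprn_gt0. Qed.

Lemma sqnorm_Z lam :
  sqnorm (Z lam) = (E * k) ^+ 2 + (lam * A) ^+ 2 + 2 * (E * k) * (lam * A) * psi.
Proof.
have -> : Z lam = rc (E * k) * expi phic + rc (lam * A) * expi (- phiz).
  by rewrite c1E rhoE conjcM conjc_rc conjc_expi !rcM; ring.
by rewrite sqnorm_polarD opprK.
Qed.

Lemma sqnorm_Z_ge lam : 0 <= lam -> -1 <= psi ->
  (1 + psi) / 2 * m * (E + lam * c2) ^+ 2 <= sqnorm (Z lam).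
Proof.
move=> lam_ge0 psi_geN1; have c2_gt0 : 0 < c2 by rewrite exprn_gt0.
have E_ge0 : 0 <= E by rewrite addr_ge0 ?mulr_ge0 ?ltW.
have psiD_ge0 : 0 <= 1 + psi by lra.
rewrite sqnorm_Z; apply: le_trans (ler_sqrD_cos _ _); last 2 first.
- by rewrite !mulr_ge0 ?(ltW k_gt0) ?(ltW sn_gt0) ?(ltW sin_gt0).
- by rewrite psi_geN1 cos_le1.
rewrite -mulrA; apply: ler_wpM2l; first by rewrite divr_ge0.
have -> : (E * k) ^+ 2 + (lam * A) ^+ 2 = k ^+ 2 * E ^+ 2 + (A / c2) ^+ 2 * (lam * c2) ^+ 2.
  by rewrite -!exprMn mulrC [A / c2 * _]mulrCA divfK // gt_eqF.
by apply: ler_weighted_sqrD; rewrite exprn_gt0 ?divr_gt0 ?mulr_gt0.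
Qed.

Lemma J_RZF_uniform_gap : -1 < psi ->
  exists2 K, 0 < K & forall lam, 0 <= lam -> J wD + K <= J (wR lam).
Proof.
move=> psi_gtN1; have c2_gt0 : 0 < c2 by rewrite exprn_gt0.
have E_gt0 : 0 < E by rewrite addr_gt0 // mulr_gt0.
have t_gt0 : 0 < (1 + psi) / 2 by rewrite divr_gt0 //; lra.
have a_gt0 : 0 < k ^+ 2 by rewrite exprn_gt0.
have b_gt0 : 0 < (A / c2) ^+ 2 by rewrite exprn_gt0 // divr_gt0 // mulr_gt0.
have m_gt0 : 0 < m := divr_gt0 (mulr_gt0 a_gt0 b_gt0) (addr_gt0 a_gt0 b_gt0).
exists (s1 * (c2 ^+ 2 * ((1 + psi) / 2 * m / E ^+ 2))).
  exact: mulr_gt0 s1_gt0 (mulr_gt0 (exprn_gt0 2 c2_gt0)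
    (divr_gt0 (mulr_gt0 t_gt0 m_gt0) (exprn_gt0 2 E_gt0))).
move=> lam lam_ge0; have Elam_gt0 : 0 < E + lam * c2 by have := mulr_ge0 lam_ge0 (ltW c2_gt0); lra.
have := J_RZF_ge_DR h00 h11 s0_gt0 s1_gt0 sn_gt0 c1_le sqnorm_rho_lt1 lam_ge0.
rewrite one_sub_sqnorm_rho; apply: le_trans; rewrite lerD2l -[_ * sqnorm _ / _]mulrA.
rewrite ler_pM2l // ler_pM2l ?exprn_gt0 //.
have := sqnorm_Z_ge lam_ge0 (ltW psi_gtN1); set x := (1 + psi) / 2 * m => x_le.
rewrite ler_pdivlMr ?exprn_gt0 ?mulr_gt0 // exprMn mulrA mulrAC divfK //.
by rewrite gt_eqF // exprn_gt0.
Qed.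

Lemma RZF_attains_DR : psi = -1 -> exists2 lam, 0 <= lam & J (wR lam) = J wD.
Proof.
move=> psiN1; have A_gt0 : 0 < A by rewrite mulr_gt0.
have E_gt0 : 0 < E by rewrite addr_gt0 // mulr_gt0 // exprn_gt0.
exists (E * k / A); first by rewrite ltW // divr_gt0 // mulr_gt0.
apply: (J_RZF_eq_DR h00 h11 s0_gt0 s1_gt0 sn_gt0 c1_le sqnorm_rho_lt1).
  by rewrite ltW // divr_gt0 // mulr_gt0.
rewrite one_sub_sqnorm_rho; apply: sqnorm_eq0.
by rewrite sqnorm_Z psiN1 divfK ?gt_eqF //; ring.
Qed.

End PolarParameters.

Theorem mainTheorem12 (R : realType) (N : nat) (h0 h1 : 'cV[R[i]]_N)
  (tau phiz phic : R) (sig0 sig1 sign : R) (c1 : R[i]) (c1abs : R) :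
  (2 <= N)%N ->
  dotH h0 h0 = 1 -> dotH h1 h1 = 1 ->
  0 < tau < pi / 2 ->
  0 <= phiz < 2 * pi ->
  dotH h0 h1 = rc (sin tau) * expi phiz ->
  0 < sig0 -> 0 < sig1 -> 0 < sign ->
  0 <= c1abs -> 0 <= phic < 2 * pi ->
  c1 = rc c1abs * expi phic ->
  c1abs ^+ 2 <= sig0 * sig1 ->
  c1 != 0 ->
  sign * tan tau - c1abs * cos tau * cos (phic + phiz) != 0 ->
  (MSE_RZF h0 h1 sig0 sig1 sign c1 = MSE_MMSE_DR h0 h1 sig0 sig1 sign c1
   <-> cos (phic + phiz) = -1).
Proof.
move=> _ h00 h11 /andP[tau_gt0 tau_lt] _ rhoE s0_gt0 s1_gt0 sn_gt0 k_ge0 _ c1E k_le c1_neq0 _.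
have sin_gt0 : 0 < sin tau by rewrite sin_gt0_pihalf // tau_gt0.
have cos_gt0 : 0 < cos tau.
  by rewrite cos_gt0_pihalf // tau_lt andbT (lt_trans _ tau_gt0) // oppr_lt0 divr_gt0 ?pi_gt0.
have k_gt0 : 0 < c1abs.
  by rewrite lt_neqAle k_ge0 andbT; apply: contra_neq c1_neq0 => k0; rewrite c1E -k0 rc0 mul0r.
have c1_le : sqnorm c1 <= sig0 * sig1 by rewrite c1E sqnormM sqnorm_rc sqnorm_expi mulr1.
split => [MSE_eq | psiN1].
  have := cos_geN1 (phic + phiz); rewrite le_eqVlt => /orP[/eqP <- // | psi_gtN1].
  have [K K_gt0 gapK] := J_RZF_uniform_gap h00 h11 s0_gt0 s1_gt0 sn_gt0 c1_le rhoE c1E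
    sin_gt0 cos_gt0 k_gt0 psi_gtN1.
  by have := MSE_RZF_ge gapK; rewrite MSE_eq /MSE_MMSE_DR gerDl leNgt K_gt0.
have [lam lam_ge0 J_eq] := RZF_attains_DR h00 h11 s0_gt0 s1_gt0 sn_gt0 c1_le rhoE c1E
  sin_gt0 cos_gt0 k_gt0 psiN1.
rewrite /MSE_MMSE_DR; apply: le_anti; apply/andP; split.
  by rewrite -J_eq MSE_RZF_le.
rewrite -[X in X <= _]addr0; apply: MSE_RZF_ge => l l_ge0.
by rewrite addr0 (J_DR_le_RZF h1 h00 s0_gt0 s1_gt0 sn_gt0 c1_le l_ge0).
Qed.
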